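(* Let $d\ge1$, let $(\varphi_n)_{n=0}^\infty$ with $\varphi_0\equiv1$ be a basis in $H(\mathbb{C}^d)$, and let $K\subset K_1$ be compact subsets of $\mathbb{C}^d$ such that for every entire function $h=\sum_{n=0}^\infty h_n\varphi_n$ we have $\sum_{n=0}^\infty|h_n|\,|\varphi_n|_K\le |h|_{K_1}$. Suppose $G\supset K_1$ is a domain in $\mathbb{C}^d$ such that $(\varphi_n)$ (restricted to $G$) is also a basis of $H(G)$. Then for every bounded holomorphic function $f$ on $G$ with expansion $f=\sum_{n=0}^\infty f_n\varphi_n$ in $H(G)$, $$\sum_{n=0}^\infty |f_n|\,|\varphi_n|_K\le \sup_{z\in G}|f(z)|.$$
   Context: $H(G)$ is the space of holomorphic functions on a domain $G$ with the topology of uniform convergence on compact subsets; a basis of $H(G)$ is a sequence such that every $f\in H(G)$ has a unique expansion $f=\sum f_n\varphi_n$ converging uniformly on compact subsets of $G$. $|f|_K:=\sup_K|f|$. *)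

From Stdlib Require Fin.
From Stdlib Require Import Reals ClassicalEpsilon.
Open Scope R_scope.

Definition CC := (R * R)%type.
Definition CC0 : CC := (0, 0).
Definition CC1 : CC := (1, 0).
Definition Cadd (a b : CC) : CC := (fst a + fst b, snd a + snd b).
Definition Csub (a b : CC) : CC := (fst a - fst b, snd a - snd b).
Definition Cmul (a b : CC) : CC :=
  (fst a * fst b - snd a * snd b, fst a * snd b + snd a * fst b).
Definition Cnorm (a : CC) : R := sqrt (fst a * fst a + snd a * snd a).

Definition Cd (d : nat) := Fin.t d -> CC.

Fixpoint Fsum (d : nat) : (Fin.t d -> CC) -> CC :=
  match d return (Fin.t d -> CC) -> CC with
  | O => fun _ => CC0
  | S d' => fun a => Cadd (a Fin.F1) (Fsum d' (fun i => a (Fin.FS i)))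
  end.

Fixpoint Fmax (d : nat) : (Fin.t d -> R) -> R :=
  match d return (Fin.t d -> R) -> R with
  | O => fun _ => 0
  | S d' => fun a => Rmax (a Fin.F1) (Fmax d' (fun i => a (Fin.FS i)))
  end.

Definition dist {d : nat} (z w : Cd d) : R :=
  Fmax d (fun i => Cnorm (Csub (w i) (z i))).

Definition is_open {d : nat} (U : Cd d -> Prop) : Prop :=
  forall z, U z -> exists r, 0 < r /\ forall w, dist z w < r -> U w.

Definition is_connected {d : nat} (U : Cd d -> Prop) : Prop :=
  forall A B : Cd d -> Prop, is_open A -> is_open B ->
    (forall z, U z -> A z \/ B z) ->
    (forall z, U z -> A z -> B z -> False) ->
    (exists z, U z /\ A z) -> (exists z, U z /\ B z) -> False.

Definition is_domain {d : nat} (G : Cd d -> Prop) : Prop :=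
  is_open G /\ (exists z, G z) /\ is_connected G.

Definition is_compact {d : nat} (K : Cd d -> Prop) : Prop :=
  forall u : nat -> Cd d, (forall n, K (u n)) ->
    exists sub : nat -> nat, (forall n, (sub n < sub (S n))%nat) /\
      exists l, K l /\
        forall eps, 0 < eps -> exists N, forall n, (N <= n)%nat ->
          dist (u (sub n)) l < eps.

Definition Cdiff_at {d : nat} (f : Cd d -> CC) (z : Cd d) : Prop :=
  exists a : Fin.t d -> CC,
    forall eps, 0 < eps -> exists delta, 0 < delta /\
      forall w, dist z w < delta ->
        Cnorm (Csub (f w) (Cadd (f z) (Fsum d (fun i => Cmul (a i) (Csub (w i) (z i))))))
          <= eps * dist z w.

Definition holo {d : nat} (G : Cd d -> Prop) (f : Cd d -> CC) : Prop :=
  is_open G /\ forall z, G z -> Cdiff_at f z.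

Definition whole {d : nat} : Cd d -> Prop := fun _ => True.

Fixpoint Cpsum (a : nat -> CC) (N : nat) : CC :=
  match N with
  | O => a O
  | S N' => Cadd (Cpsum a N') (a N)
  end.

Definition expands {d : nat} (G : Cd d -> Prop) (phi : nat -> Cd d -> CC)
  (c : nat -> CC) (f : Cd d -> CC) : Prop :=
  forall K, is_compact K -> (forall z, K z -> G z) ->
    forall eps, 0 < eps -> exists N, forall n, (N <= n)%nat ->
      forall z, K z -> Cnorm (Csub (Cpsum (fun k => Cmul (c k) (phi k z)) n) (f z)) <= eps.

Definition is_basis {d : nat} (G : Cd d -> Prop) (phi : nat -> Cd d -> CC) : Prop :=
  (forall n, holo G (phi n)) /\
  forall f, holo G f ->
    exists c, expands G phi c f /\ forall c', expands G phi c' f -> c' = c.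

(* |g|_K = sup_K |g|, with the convention |g|_emptyset = 0 *)
Definition supnorm {d : nat} (K : Cd d -> Prop) (g : Cd d -> CC) : R :=
  epsilon (inhabits 0)
    (fun s => is_lub (fun x => x = 0 \/ exists z, K z /\ x = Cnorm (g z)) s).

From Pilot Require Import Defs.
From Stdlib Require Import Reals.
From Stdlib Require Import Lra Lia Psatz ClassicalEpsilon.
Open Scope R_scope.

(* Let f = sum c_n phi_n in H(G) be bounded, with s = sup_G |f|.
   The partial sums S_N = sum_{n <= N} c_n phi_n are finite combinations of
   entire functions, hence entire, and they expand in H(C^d) with the
   truncated coefficient sequence (c_0, ..., c_N, 0, 0, ...).  The hypothesis
   on K and K1 therefore gives, for N' <= N,
       sum_{n <= N'} |c_n| |phi_n|_K  <=  |S_N|_K1.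
   Since K1 is a compact subset of G, S_N -> f uniformly on K1, so
   |S_N|_K1 <= s + eps for N large; letting eps -> 0 proves the theorem. *)

Lemma CC_ext (p q : CC) : fst p = fst q -> snd p = snd q -> p = q.
Proof. destruct p, q; simpl; intros; subst; auto. Qed.

Lemma Cnorm_nonneg (x : CC) : 0 <= Cnorm x.
Proof. apply sqrt_pos. Qed.

Lemma Cnorm_triangle (x y : CC) : Cnorm (Cadd x y) <= Cnorm x + Cnorm y.
Proof.
  destruct x as [a b], y as [c d]; unfold Cnorm, Cadd; simpl.
  set (A := a * a + b * b); set (C := c * c + d * d).
  assert (hA : 0 <= A) by (unfold A; nra).
  assert (hC : 0 <= C) by (unfold C; nra).
  pose proof (sqrt_pos A) as sA; pose proof (sqrt_pos C) as sC.
  pose proof (sqrt_sqrt A hA) as eA; pose proof (sqrt_sqrt C hC) as eC.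
  assert (cauchy_schwarz : a * c + b * d <= sqrt A * sqrt C).
  { assert (hsq : (a * c + b * d) * (a * c + b * d) <= A * C)
      by (unfold A, C; pose proof (pow2_ge_0 (a * d - b * c)); nra).
    assert (hprod : (sqrt A * sqrt C) * (sqrt A * sqrt C) = A * C)
      by (transitivity ((sqrt A * sqrt A) * (sqrt C * sqrt C)); [ring | rewrite eA, eC; ring]).
    pose proof (Rmult_le_pos _ _ sA sC); nra. }
  rewrite <- (sqrt_Rsqr (sqrt A + sqrt C)) by lra.
  apply sqrt_le_1_alt; unfold Rsqr, A, C in *; nra.
Qed.

Lemma Cnorm_mul (x y : CC) : Cnorm (Cmul x y) = Cnorm x * Cnorm y.
Proof.
  destruct x as [a b], y as [c d]; unfold Cnorm, Cmul; simpl.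
  rewrite <- sqrt_mult by nra; f_equal; ring.
Qed.

Lemma Cnorm_Csub_self (x : CC) : Cnorm (Csub x x) = 0.
Proof.
  unfold Cnorm, Csub; simpl.
  replace (_ * _ + _ * _) with 0 by ring; apply sqrt_0.
Qed.

Lemma Cnorm_le_sub (x y : CC) : Cnorm x <= Cnorm (Csub x y) + Cnorm y.
Proof.
  replace x with (Cadd (Csub x y) y) at 1
    by (apply CC_ext; unfold Cadd, Csub; simpl; ring).
  apply Cnorm_triangle.
Qed.

Lemma Fmax_nonneg (d : nat) (u : Fin.t d -> R) : (forall i, 0 <= u i) -> 0 <= Fmax d u.
Proof.
  induction d as [|d IH]; simpl; intros hu; [lra|].
  eapply Rle_trans; [apply (IH (fun i => u (Fin.FS i))); auto | apply Rmax_r].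
Qed.

Lemma dist_nonneg (d : nat) (z w : Cd d) : 0 <= Defs.dist z w.
Proof. apply Fmax_nonneg; intros; apply Cnorm_nonneg. Qed.

Lemma Fsum_Cadd (d : nat) (a b x : Fin.t d -> CC) :
  Fsum d (fun i => Cmul (Cadd (a i) (b i)) (x i)) =
  Cadd (Fsum d (fun i => Cmul (a i) (x i))) (Fsum d (fun i => Cmul (b i) (x i))).
Proof.
  induction d as [|d IH]; simpl.
  - apply CC_ext; unfold Cadd, CC0; simpl; ring.
  - rewrite (IH (fun i => a (Fin.FS i)) (fun i => b (Fin.FS i)) (fun i => x (Fin.FS i))).
    apply CC_ext; unfold Cadd, Cmul; simpl; ring.
Qed.

Lemma Fsum_Cmul (d : nat) (k : CC) (a x : Fin.t d -> CC) :
  Fsum d (fun i => Cmul (Cmul k (a i)) (x i)) = Cmul k (Fsum d (fun i => Cmul (a i) (x i))).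
Proof.
  induction d as [|d IH]; simpl.
  - apply CC_ext; unfold Cmul, CC0; simpl; ring.
  - rewrite (IH (fun i => a (Fin.FS i)) (fun i => x (Fin.FS i))).
    apply CC_ext; unfold Cadd, Cmul; simpl; ring.
Qed.

Lemma Cdiff_add (d : nat) (f g : Cd d -> CC) (z : Cd d) :
  Cdiff_at f z -> Cdiff_at g z -> Cdiff_at (fun w => Cadd (f w) (g w)) z.
Proof.
  intros [a Ha] [b Hb]; exists (fun i => Cadd (a i) (b i)); intros eps heps.
  destruct (Ha (eps / 2)) as [d1 [hd1 H1]]; [lra|].
  destruct (Hb (eps / 2)) as [d2 [hd2 H2]]; [lra|].
  exists (Rmin d1 d2); split; [apply Rmin_pos; auto|]; intros w hw.
  rewrite Fsum_Cadd.
  specialize (H1 w (Rlt_le_trans _ _ _ hw (Rmin_l _ _))).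
  specialize (H2 w (Rlt_le_trans _ _ _ hw (Rmin_r _ _))).
  set (Rf := Csub (f w) (Cadd (f z) (Fsum d (fun i => Cmul (a i) (Csub (w i) (z i)))))) in H1.
  set (Rg := Csub (g w) (Cadd (g z) (Fsum d (fun i => Cmul (b i) (Csub (w i) (z i)))))) in H2.
  assert (remainder : Csub (Cadd (f w) (g w)) (Cadd (Cadd (f z) (g z))
      (Cadd (Fsum d (fun i => Cmul (a i) (Csub (w i) (z i))))
            (Fsum d (fun i => Cmul (b i) (Csub (w i) (z i)))))) = Cadd Rf Rg)
    by (apply CC_ext; unfold Rf, Rg, Cadd, Csub; simpl; ring).
  rewrite remainder; eapply Rle_trans; [apply Cnorm_triangle | lra].
Qed.

Lemma Cdiff_scal (d : nat) (k : CC) (f : Cd d -> CC) (z : Cd d) :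
  Cdiff_at f z -> Cdiff_at (fun w => Cmul k (f w)) z.
Proof.
  intros [a Ha]; exists (fun i => Cmul k (a i)); intros eps heps.
  pose proof (Cnorm_nonneg k) as hk.
  destruct (Ha (eps / (Cnorm k + 1))) as [delta [hdelta H1]].
  { apply Rdiv_lt_0_compat; lra. }
  exists delta; split; auto; intros w hw.
  rewrite Fsum_Cmul.
  specialize (H1 w hw).
  set (Rf := Csub (f w) (Cadd (f z) (Fsum d (fun i => Cmul (a i) (Csub (w i) (z i)))))) in H1.
  assert (remainder : Csub (Cmul k (f w)) (Cadd (Cmul k (f z))
      (Cmul k (Fsum d (fun i => Cmul (a i) (Csub (w i) (z i)))))) = Cmul k Rf)
    by (apply CC_ext; unfold Rf, Cadd, Csub, Cmul; simpl; ring).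
  rewrite remainder, Cnorm_mul.
  pose proof (dist_nonneg d z w).
  assert (hfactor : Cnorm k * (eps / (Cnorm k + 1)) <= eps).
  { apply (Rmult_le_reg_r (Cnorm k + 1)); [lra|].
    replace (Cnorm k * (eps / (Cnorm k + 1)) * (Cnorm k + 1)) with (Cnorm k * eps)
      by (field; lra).
    nra. }
  apply Rle_trans with (Cnorm k * (eps / (Cnorm k + 1) * Defs.dist z w)).
  - apply Rmult_le_compat_l; auto.
  - rewrite <- Rmult_assoc; apply Rmult_le_compat_r; auto.
Qed.

Lemma whole_open (d : nat) : is_open (@whole d).
Proof. intros z _; exists 1; split; [lra | intros; exact I]. Qed.

Definition partial_sum {d : nat} (c : nat -> CC) (phi : nat -> Cd d -> CC)
  (N : nat) (w : Cd d) : CC :=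
  Cpsum (fun k => Cmul (c k) (phi k w)) N.

Definition truncate (c : nat -> CC) (N k : nat) : CC :=
  if Nat.leb k N then c k else CC0.

Lemma partial_sum_holo (d : nat) (G : Cd d -> Prop) (phi : nat -> Cd d -> CC)
  (c : nat -> CC) (N : nat) :
  is_open G -> (forall k, holo G (phi k)) -> holo G (partial_sum c phi N).
Proof.
  intros hopen hphi; split; [exact hopen|]; intros z Gz.
  unfold partial_sum; induction N as [|N IH]; simpl.
  - apply Cdiff_scal, (proj2 (hphi O)), Gz.
  - apply (Cdiff_add d (fun w => Cpsum (fun k => Cmul (c k) (phi k w)) N)); [exact IH|].
    apply Cdiff_scal, (proj2 (hphi (S N))), Gz.
Qed.

Lemma Cpsum_ext (u v : nat -> CC) (n : nat) :
  (forall k, (k <= n)%nat -> u k = v k) -> Cpsum u n = Cpsum v n.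
Proof.
  induction n as [|n IH]; simpl; intros huv.
  - apply huv; lia.
  - rewrite IH by (intros; apply huv; lia); rewrite huv by lia; reflexivity.
Qed.

Lemma partial_sum_truncate (d : nat) (c : nat -> CC) (phi : nat -> Cd d -> CC)
  (N n : nat) (w : Cd d) :
  (N <= n)%nat -> partial_sum (truncate c N) phi n w = partial_sum c phi N w.
Proof.
  intros hNn; unfold partial_sum.
  induction hNn as [|n hNn IH]; simpl.
  - apply Cpsum_ext; intros k hk; unfold truncate.
    replace (Nat.leb k N) with true by (symmetry; apply Nat.leb_le; lia).
    reflexivity.
  - rewrite IH; unfold truncate.
    replace (Nat.leb (S n) N) with false by (symmetry; apply Nat.leb_gt; lia).
    apply CC_ext; unfold Cadd, Cmul, CC0; simpl; ring.
Qed.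

Lemma expands_partial_sum (d : nat) (G : Cd d -> Prop) (phi : nat -> Cd d -> CC)
  (c : nat -> CC) (N : nat) :
  expands G phi (truncate c N) (partial_sum c phi N).
Proof.
  intros L _ _ eps heps; exists N; intros n hn z _.
  change (Cpsum _ n) with (partial_sum (truncate c N) phi n z).
  rewrite partial_sum_truncate, Cnorm_Csub_self by exact hn; lra.
Qed.

Lemma sum_truncate (c : nat -> CC) (a : nat -> R) (N M : nat) :
  (M <= N)%nat ->
  sum_f_R0 (fun n => Cnorm (truncate c N n) * a n) M = sum_f_R0 (fun n => Cnorm (c n) * a n) M.
Proof.
  intros hMN; apply sum_eq; intros n hn; unfold truncate.
  replace (Nat.leb n N) with true by (symmetry; apply Nat.leb_le; lia).
  reflexivity.
Qed.

Definition supnorm_set {d : nat} (K : Cd d -> Prop) (g : Cd d -> CC) (x : R) : Prop :=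
  x = 0 \/ exists z, K z /\ x = Cnorm (g z).

Lemma supnorm_is_lub (d : nat) (K : Cd d -> Prop) (g : Cd d -> CC) (b : R) :
  (forall z, K z -> Cnorm (g z) <= b) -> is_lub (supnorm_set K g) (supnorm K g).
Proof.
  intros hb; unfold supnorm; apply epsilon_spec.
  destruct (completeness (supnorm_set K g)) as [m hm].
  - exists (Rmax b 0); intros x [-> | [z [Kz ->]]]; [apply Rmax_r|].
    eapply Rle_trans; [apply hb, Kz | apply Rmax_l].
  - exists 0; left; reflexivity.
  - exists m; exact hm.
Qed.

Lemma supnorm_upper (d : nat) (K : Cd d -> Prop) (g : Cd d -> CC) (b : R) (z : Cd d) :
  (forall w, K w -> Cnorm (g w) <= b) -> K z -> Cnorm (g z) <= supnorm K g.
Proof.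
  intros hb Kz; apply (supnorm_is_lub d K g b hb); right; exists z; auto.
Qed.

Lemma supnorm_nonneg_of_bounded (d : nat) (K : Cd d -> Prop) (g : Cd d -> CC) (b : R) :
  (forall w, K w -> Cnorm (g w) <= b) -> 0 <= supnorm K g.
Proof.
  intros hb; apply (supnorm_is_lub d K g b hb); left; reflexivity.
Qed.

Lemma supnorm_least (d : nat) (K : Cd d -> Prop) (g : Cd d -> CC) (b : R) :
  0 <= b -> (forall z, K z -> Cnorm (g z) <= b) -> supnorm K g <= b.
Proof.
  intros hb0 hb; apply (supnorm_is_lub d K g b hb).
  intros x [-> | [z [Kz ->]]]; auto.
Qed.

Lemma supnorm_partial_sum_le (d : nat) (G K1 : Cd d -> Prop) (phi : nat -> Cd d -> CC)
  (c : nat -> CC) (f : Cd d -> CC) (s eps : R) :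
  is_compact K1 -> (forall z, K1 z -> G z) -> expands G phi c f ->
  0 <= s -> (forall z, G z -> Cnorm (f z) <= s) -> 0 < eps ->
  exists N0, forall N, (N0 <= N)%nat -> supnorm K1 (partial_sum c phi N) <= s + eps.
Proof.
  intros hK1 hK1G hc hs hfs heps.
  destruct (hc K1 hK1 hK1G eps heps) as [N0 hN0].
  exists N0; intros N hN; apply supnorm_least; [lra|]; intros z K1z.
  eapply Rle_trans; [apply (Cnorm_le_sub _ (f z))|].
  pose proof (hN0 N hN z K1z); pose proof (hfs z (hK1G z K1z)).
  unfold partial_sum; lra.
Qed.

Theorem mainTheorem4 (d : nat) (hd : (1 <= d)%nat)
  (phi : nat -> Cd d -> CC)
  (hphi0 : forall z, phi O z = CC1)
  (hbasis : is_basis whole phi)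
  (K K1 : Cd d -> Prop)
  (hK : is_compact K) (hK1 : is_compact K1) (hKK1 : forall z, K z -> K1 z)
  (hineq : forall (h : Cd d -> CC) (c : nat -> CC),
     holo whole h -> expands whole phi c h ->
     forall N, sum_f_R0 (fun n => Cnorm (c n) * supnorm K (phi n)) N <= supnorm K1 h)
  (G : Cd d -> Prop) (hG : is_domain G) (hK1G : forall z, K1 z -> G z)
  (hbasisG : is_basis G phi)
  (f : Cd d -> CC) (hf : holo G f) (hfb : exists M, forall z, G z -> Cnorm (f z) <= M)
  (c : nat -> CC) (hc : expands G phi c f) :
  forall N, sum_f_R0 (fun n => Cnorm (c n) * supnorm K (phi n)) N <= supnorm G f.
Proof.
  intros N'; destruct hfb as [M hM].
  assert (hs : 0 <= supnorm G f) by exact (supnorm_nonneg_of_bounded d G f M hM).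
  assert (hfs : forall z, G z -> Cnorm (f z) <= supnorm G f)
    by (intros z Gz; exact (supnorm_upper d G f M z hM Gz)).
  apply Rle_plus_epsilon; intros eps heps.
  destruct (supnorm_partial_sum_le d G K1 phi c f _ eps hK1 hK1G hc hs hfs heps)
    as [N0 hN0].
  set (N := Nat.max N0 N').
  assert (hSN : holo whole (partial_sum c phi N)).
  { apply partial_sum_holo; [apply whole_open | apply hbasis]. }
  pose proof (hineq _ _ hSN (expands_partial_sum d whole phi c N) N') as hKK1S.
  rewrite sum_truncate in hKK1S by lia.
  pose proof (hN0 N (Nat.le_max_l _ _)); lra.
Qed.
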